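(* Let $\mathbf{k}$ be a field, let $d \geq 1$, let $A = \mathbf{k}^{d}$, and assume that $\mathbf{k}$ has a full set of $d$-th roots of unity (i.e. $d$ distinct $d$-th roots of unity). Let $M$ be a finite-dimensional $\mathbf{k}$-vector space and let $\phi : A \to \mathrm{End}_{\mathbf{k}}(M)$ be a minimal-characteristic morphism. Then $\phi$ is a (unital) $\mathbf{k}$-algebra homomorphism.
   Context: For $a \in A$, let $\overline{\chi}_a(t) \in \mathbf{k}[t]$ denote the minimal polynomial of the left multiplication operator $\mu_L(a) : A \to A$, $x \mapsto ax$, and $\chi_a(t)$ its characteristic polynomial. A $\mathbf{k}$-linear map $\phi : A \to \mathrm{End}_{\mathbf{k}}(M)$ is called a characteristic morphism if $\chi_a(\phi(a)) = 0$ for all $a \in A$, and a minimal-characteristic morphism if moreover $\overline{\chi}_a(\phi(a)) = 0$ for all $a \in A$. *)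

From HB Require Import structures.
From mathcomp Require Import all_boot all_order all_algebra.
Set Implicit Arguments. Unset Strict Implicit. Unset Printing Implicit Defensive.
Import GRing.Theory.
Local Open Scope ring_scope.

(* The algebra A = k^d, realised on row vectors 'rV[k]_d with componentwise
   product and unit the all-ones vector. *)
Definition prodA (k : fieldType) (d : nat) (a b : 'rV[k]_d) : 'rV[k]_d :=
  \row_i (a 0 i * b 0 i).
Definition oneA (k : fieldType) (d : nat) : 'rV[k]_d := const_mx 1.

(* Matrix (in the standard basis, row-vector convention) of the left
   multiplication operator mu_L(a) : A -> A, x |-> a x. *)
Definition muL (k : fieldType) (d : nat) (a : 'rV[k]_d) : 'M[k]_d :=
  lin1_mx (prodA a).

(* Evaluation of a polynomial at an endomorphism of M = k^n (any n, incl. 0). *)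
Definition peval (k : fieldType) (n : nat) (p : {poly k}) (B : 'M[k]_n) : 'M[k]_n :=
  \sum_(i < size p) p`_i *: B ^+ i.

(* chi_a = characteristic polynomial of mu_L(a); chibar_a = minimal polynomial.
   d = d'.+1 (d >= 1). *)
Definition characteristic_morphism (k : fieldType) (d' n : nat)
  (phi : 'rV[k]_d'.+1 -> 'M[k]_n) : Prop :=
  forall a, peval (char_poly (muL a)) (phi a) = 0.

Definition min_characteristic_morphism (k : fieldType) (d' n : nat)
  (phi : 'rV[k]_d'.+1 -> 'M[k]_n) : Prop :=
  characteristic_morphism phi /\
  forall a, peval (mxminpoly (muL a)) (phi a) = 0.

From HB Require Import structures.
From mathcomp Require Import all_boot all_order all_algebra zify.
Set Implicit Arguments.
Unset Strict Implicit.
Unset Printing Implicit Defensive.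

Import GRing.Theory.
Local Open Scope ring_scope.

(* The minimal polynomial of left multiplication by a in k^d vanishes on the
   matrix phi a, so phi a is annihilated by any polynomial vanishing on the
   coordinates of a. For the unit vectors e_i and for e_i + e_j this makes
   the phi e_i idempotents with phi e_i phi e_j + phi e_j phi e_i = 0; the
   polynomial X (X - 1) (X - c) for e_i + c e_j, with c a root of unity
   distinct from 1, then forces phi e_j phi e_i = 0. Multiplicativity follows
   by bilinearity, and phi 1 = 1 since 1 has minimal polynomial X - 1. *)

Lemma peval_horner_mx (k : fieldType) n (p : {poly k}) (B : 'M[k]_n.+1) :
  peval p B = horner_mx B p.
Proof.
rewrite /peval -[in RHS](coefK p) poly_def linear_sum; apply: eq_bigr => i _.
by rewrite linearZ rmorphXn /= horner_mx_X.
Qed.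

Lemma muL_diag_mx (k : fieldType) d (a : 'rV[k]_d) : muL a = diag_mx a.
Proof.
apply/matrixP => i j; rewrite /muL /lin1_mx mxE /prodA !mxE /=.
by rewrite eq_sym; case: eqP => [->|]; rewrite ?mulr1 ?mulr0.
Qed.

Lemma unity_roots_neq01 (k : fieldType) m (s : seq k) :
  uniq s -> size s = m -> all m.-unity_root s -> (1 < m)%N ->
  exists2 c : k, c != 0 & c != 1.
Proof.
move=> + <-; case: s => [|x [|y s]] //= /andP[xys _] /and3P[ux uy _] _.
have unity_root_neq0 z : (size s).+2.-unity_root z -> z != 0.
  by rewrite unity_rootE; apply: contraTneq => ->; rewrite expr0n eq_sym oner_eq0.
have [x1|x1] := eqVneq x 1; last by exists x => //; apply: unity_root_neq0.
exists y; first exact: unity_root_neq0.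
by rewrite -x1 eq_sym; move: xys; rewrite inE negb_or => /andP[].
Qed.

(* With P, Q and P + Q idempotent, P Q + Q P = 0, so T := P + c Q satisfies
   T (T - 1) = (c^2 - c) Q and T (T - 1) (T - c) = (c^2 - c) Q P. *)
Lemma idempotents_mul_eq0 (k : fieldType) (R : algType k) (P Q : R) (c : k) :
  c != 0 -> c != 1 -> P * P = P -> Q * Q = Q -> (P + Q) * (P + Q) = P + Q ->
  (P + c *: Q) * (P + c *: Q - 1) * (P + c *: Q - c%:A) = 0 -> Q * P = 0.
Proof.
move=> c0 c1 PP QQ PQ_PQ.
have anticomm : P * Q + Q * P = 0.
  apply: (@addrI _ (P + Q)); rewrite addr0 -[in RHS]PQ_PQ.
  by rewrite mulrDl !mulrDr PP QQ [Q * P + Q]addrC addrACA.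
have -> : (P + c *: Q) * (P + c *: Q - 1) = (c * c - c) *: Q.
  rewrite mulrBr mulr1 mulrDl !mulrDr PP -!scalerAl -!scalerAr QQ scalerA.
  rewrite [c *: (Q * P) + _]addrC addrACA -scalerDr anticomm scaler0 addr0.
  by rewrite opprD addrACA subrr add0r scalerBl.
rewrite -scalerAl mulrBr mulrDr -scalerAr QQ mulr_algr addrK.
move/eqP; rewrite scaler_eq0 => /orP[|/eqP //].
have -> : c * c - c = c * (c - 1) by rewrite mulrBr mulr1.
by rewrite mulf_eq0 subr_eq0 (negPf c0) (negPf c1).
Qed.

Lemma delta_add_scale_entry (k : fieldType) d (i j l : 'I_d) (x y : k) :
  i != j -> (x *: delta_mx 0 i + y *: delta_mx 0 j : 'rV_d) 0 l \in [:: x; y; 0].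
Proof.
move=> nij; rewrite !mxE eqxx /=.
have [->|_] := eqVneq l i; first by rewrite (negPf nij) mulr1 mulr0 addr0 mem_head.
have [_|_] := eqVneq l j; first by rewrite mulr0 mulr1 add0r !inE eqxx orbT.
by rewrite !mulr0 addr0 !inE eqxx !orbT.
Qed.

Section MinCharacteristicMorphism.

Variables (k : fieldType) (d' n : nat).
Variable phi : {linear 'rV[k]_d'.+1 -> 'M[k]_n.+1}.
Hypothesis phi_minpoly : forall a, peval (mxminpoly (muL a)) (phi a) = 0.

Lemma horner_mx_phi_eq0 (a : 'rV[k]_d'.+1) (p : {poly k}) (s : seq k) :
  (forall l, a 0 l \in s) -> all (root p) s -> horner_mx (phi a) p = 0.
Proof.
move=> a_s /allP p_s.
have : horner_mx (muL a) p = 0.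
  rewrite muL_diag_mx horner_mx_diag; apply/matrixP => i j.
  by rewrite !mxE (rootP (p_s _ (a_s i))) mul0rn.
move/mxminpoly_min/dvdpP => [q ->].
by rewrite rmorphM /= -[horner_mx _ (mxminpoly _)]peval_horner_mx phi_minpoly mulr0.
Qed.

Lemma phi_idem (a : 'rV[k]_d'.+1) :
  (forall l, a 0 l \in [:: 1; 0]) -> phi a * phi a = phi a.
Proof.
move=> a01.
have root01 : all (root ('X * ('X - 1))) [:: 1; 0 : k].
  by rewrite /= /root !hornerE subrr !eqxx.
have /eqP := horner_mx_phi_eq0 a01 root01.
rewrite rmorphM rmorphB /= horner_mx_X horner_mx_C mulrBr mulr1 subr_eq0.
by move/eqP.
Qed.

Lemma phi_delta_idem (i : 'I_d'.+1) :
  phi (delta_mx 0 i) * phi (delta_mx 0 i) = phi (delta_mx 0 i).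
Proof.
by apply: phi_idem => l; rewrite mxE; case: (_ && _); rewrite !inE eqxx ?orbT.
Qed.

Lemma phi_delta_mul_eq0 (c : k) (i j : 'I_d'.+1) : c != 0 -> c != 1 ->
  i != j -> phi (delta_mx 0 j) * phi (delta_mx 0 i) = 0.
Proof.
move=> c0 c1 nij.
apply: (idempotents_mul_eq0 c0 c1 (phi_delta_idem i) (phi_delta_idem j)).
  rewrite -linearD; apply: phi_idem => l.
  have := delta_add_scale_entry l (1 : k) 1 nij; rewrite !scale1r !inE.
  by rewrite orbA orbb.
have := horner_mx_phi_eq0 (p := 'X * ('X - 1) * ('X - c%:P))
  (fun l => delta_add_scale_entry l 1 c nij).
rewrite !rmorphM !rmorphB /= horner_mx_X !horner_mx_C scalemx1.
rewrite linearD !linearZ /= scale1r; apply.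
by rewrite /= /root !hornerE !subrr !(mulr0, mul0r) !eqxx.
Qed.

Lemma phi_prodA (a b : 'rV[k]_d'.+1) :
  ((0 < d')%N -> exists2 c : k, c != 0 & c != 1) ->
  phi (prodA a b) = phi a *m phi b.
Proof.
move=> exists_c.
have phi_sum u : phi u = \sum_i u 0 i *: phi (delta_mx 0 i).
  by rewrite {1}(row_sum_delta u) linear_sum; apply: eq_bigr => i _; rewrite linearZ.
rewrite mulmxE !phi_sum mulr_suml; apply: eq_bigr => i _.
rewrite mulr_sumr (bigD1 i) //= big1 ?addr0.
  by rewrite -scalerAl -scalerAr scalerA phi_delta_idem /prodA mxE.
move=> j nji.
have [|c c0 c1] := exists_c.
  by move: (ltn_ord i) (ltn_ord j) nji; rewrite -val_eqE /=; lia.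
by rewrite -scalerAl -scalerAr (phi_delta_mul_eq0 c0 c1 nji) !scaler0.
Qed.

Lemma phi_oneA : phi (oneA k d'.+1) = 1%:M.
Proof.
have one_entries l : oneA k d'.+1 0 l \in [:: 1] by rewrite mxE mem_head.
have root1 : all (root ('X - 1)) [:: 1 : k] by rewrite /= /root hornerXsubC subrr eqxx.
have /eqP := horner_mx_phi_eq0 one_entries root1.
by rewrite rmorphB /= horner_mx_X horner_mx_C subr_eq0 => /eqP.
Qed.

End MinCharacteristicMorphism.

Theorem mainTheorem2 (k : fieldType) (d' : nat)
  (roots : exists s : seq k,
     [/\ uniq s, size s = d'.+1 & all (d'.+1).-unity_root s])
  (n : nat) (phi : {linear 'rV[k]_d'.+1 -> 'M[k]_n})
  (hphi : min_characteristic_morphism phi) :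
  (forall a b : 'rV[k]_d'.+1, phi (prodA a b) = phi a *m phi b) /\
  phi (oneA k d'.+1) = 1%:M.
Proof.
case: n phi hphi => [|n] phi [_ phi_minpoly].
  by split => [a b|]; rewrite flatmx0 [RHS]flatmx0.
split=> [a b|]; last exact: phi_oneA.
apply: phi_prodA => // d'_gt0.
have [s [uniq_s size_s roots_s]] := roots.
exact: unity_roots_neq01 uniq_s size_s roots_s d'_gt0.
Qed.
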